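(* Let the mesh have no non-periodic boundary facets, let $\mathcal G\subset\mathbb R^m$ be convex, and let the nodal coefficients satisfy $u_j\in\mathcal G$ for $j=1,\dots,N_h$. For every cell $K_e$, let $\lambda_{0i}^e>0$ ($i\in\mathcal N_e^\partial$) be such that the bar states $\bar u_{0i}^e$ lie in $\mathcal G$, and let $0<\Delta t_e\le\Delta t_e^{\max}$, where $\bar u^e$, $\bar u_{0i}^e$ and $\Delta t_e^{\max}$ are as defined in the context. Let the global time step satisfy $0<\Delta t\le\min_{1\le e\le E_h}\Delta t_e$. Then for every $i=1,\dots,N_h$ the forward Euler update $$m_iu_i^{\rm SSP}=\sum_{e\in\mathcal E_i}m_i^e\left[\Big(1-\frac{\Delta t}{\Delta t_e}\Big)u_i+\frac{\Delta t}{\Delta t_e}\bar u^e\right]$$ satisfies $u_i^{\rm SSP}\in\mathcal G$.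
   Context: Setting: $\Omega\subset\mathbb R^d$, a conforming mesh of cells $K_e$, $e=1,\dots,E_h$, and a conservation law $\partial_tu+\nabla\cdot\mathbf f(u)=0$ with $u\in\mathbb R^m$, $\mathbf f:\mathbb R^m\to\mathbb R^{m\times d}$. The continuous finite element space uses Bernstein basis functions $\varphi_j$, $j=1,\dots,N_h$ (continuous, nonnegative, partition of unity), with nodal points $\mathbf x_j$ and coefficients $u_j$. $\mathcal N_e$: indices of basis functions supported on $K_e$; $\mathcal E_i$: indices of cells $e$ with $i\in\mathcal N_e$. $m_i^e=\int_{K_e}\varphi_i\,\mathrm d\mathbf x$, $m_i=\sum_{e\in\mathcal E_i}m_i^e$. $\mathcal N_e^\partial=\{i\in\mathcal N_e:\mathbf x_i\in\partial K_e\}$, $\mathcal N_e^0=\mathcal N_e\setminus\mathcal N_e^\partial$ (for $i\in\mathcal N_e^0$, $\varphi_i=0$ on $\partial K_e$). $u^e=\frac1{|K_e|}\sum_{i\in\mathcal N_e}m_i^eu_i$. $\mathbf n$: unit outward normal of $K_e$; $\mathbf c_{i,e}=\int_{\partial K_e}\varphi_i\mathbf n\,\mathrm ds\ne0$ for $i\in\mathcal N_e^\partial$, $\mathbf n_{i,e}=\mathbf c_{i,e}/|\mathbf c_{i,e}|$. If $\mathcal N_e^0\ne\emptyset$: $s=1$, $m_0^e=\sum_{i\in\mathcal N_e^0}m_i^e$, $u_0^e=\frac1{m_0^e}\sum_{i\in\mathcal N_e^0}m_i^eu_i$; otherwise $s=2$, $m_0^e=|K_e|$, $u_0^e=u^e$.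 Bar states: $\bar u_{0i}^e=\frac{u_i+u_0^e}2-\frac{(\mathbf f(u_i)-\mathbf f(u_0^e))\mathbf n_{i,e}}{2\lambda_{0i}^e}$. Intermediate cell average: $\bar u^e=u^e-\frac{\Delta t_e}{|K_e|}\int_{\partial K_e}\mathbf f_h\mathbf n\,\mathrm ds$ with $\mathbf f_h=\sum_{j}\mathbf f(u_j)\varphi_j$. Bound: $\Delta t_e^{\max}=\frac1s\min\Big\{\min_{i\in\mathcal N_e^\partial}\frac{m_i^e}{|\mathbf c_{i,e}|\lambda_{0i}^e},\frac{m_0^e}{\sum_{i\in\mathcal N_e^\partial}|\mathbf c_{i,e}|\lambda_{0i}^e}\Big\}$. *)

From HB Require Import structures.
From mathcomp Require Import all_boot all_order all_algebra.
From mathcomp Require Import boolp.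
Set Implicit Arguments. Unset Strict Implicit. Unset Printing Implicit Defensive.
Import Order.TTheory GRing.Theory Num.Theory.
Local Open Scope ring_scope.

Definition convex_set (R : rcfType) (m : nat) (G : 'cV[R]_m -> Prop) :=
  forall x y, G x -> G y -> forall t : R, 0 <= t -> t <= 1 ->
    G (t *: x + (1 - t) *: y).

Definition vnorm (R : rcfType) (d : nat) (v : 'cV[R]_d) : R :=
  Num.sqrt (\sum_(k < d) v k 0 ^+ 2).

(* A conforming mesh with a continuous finite element space (Bernstein basis),
   together with the cell integrals.
   vint e g  = \int_{K_e} g dx ,
   bint e g  = \int_{\partial K_e} g n ds  (vector in R^d). *)
Record fe_mesh (R : rcfType) (d : nat) := FEMesh {
  n_cells : nat;
  n_nodes : nat;
  cell : 'I_n_cells -> 'cV[R]_d -> Prop;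
  bdry : 'I_n_cells -> 'cV[R]_d -> Prop;
  node : 'I_n_nodes -> 'cV[R]_d;
  phi  : 'I_n_nodes -> 'cV[R]_d -> R;
  vint : 'I_n_cells -> ('cV[R]_d -> R) -> R;
  bint : 'I_n_cells -> ('cV[R]_d -> R) -> 'cV[R]_d;
  vint_lin : forall e a g h,
    vint e (fun x => a * g x + h x) = a * vint e g + vint e h;
  bint_lin : forall e a g h,
    bint e (fun x => a * g x + h x) = a *: bint e g + bint e h;
  vint_local : forall e g h, (forall x, cell e x -> g x = h x) ->
    vint e g = vint e h;
  bint_local : forall e g h, (forall x, bdry e x -> g x = h x) ->
    bint e g = bint e h;
  vint_ge0 : forall e g, (forall x, cell e x -> 0 <= g x) -> 0 <= vint e g;
  bdry_sub : forall e x, bdry e x -> cell e x;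
  divergence : forall e, bint e (fun _ => 1) = 0;
  phi_ge0 : forall j x, 0 <= phi j x;
  phi_pu : forall e x, cell e x -> \sum_j phi j x = 1
}.

Arguments cell {R d} f e x.
Arguments bdry {R d} f e x.
Arguments node {R d} f i.
Arguments phi {R d} f j x.
Arguments vint {R d} f e g.
Arguments bint {R d} f e g.

Section Defs.
Variables (R : rcfType) (d m : nat) (M : fe_mesh R d).
Local Notation E := (n_cells M).
Local Notation N := (n_nodes M).

Definition Nset (e : 'I_E) : {set 'I_N} :=
  [set i | `[< exists x, cell M e x /\ phi M i x <> 0 >]].
Definition Eset (i : 'I_N) : {set 'I_E} := [set e | i \in Nset e].
Definition Nbd (e : 'I_E) : {set 'I_N} :=
  [set i in Nset e | `[< bdry M e (node M i) >]].
Definition Nint (e : 'I_E) : {set 'I_N} := Nset e :\: Nbd e.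

Definition mloc (e : 'I_E) (i : 'I_N) : R := vint M e (phi M i).
Definition mglob (i : 'I_N) : R := \sum_(e in Eset i) mloc e i.
Definition vol (e : 'I_E) : R := vint M e (fun _ => 1).
Definition cvec (e : 'I_E) (i : 'I_N) : 'cV[R]_d := bint M e (phi M i).
Definition nvec (e : 'I_E) (i : 'I_N) : 'cV[R]_d :=
  (vnorm (cvec e i))^-1 *: cvec e i.

Variables (f : 'cV[R]_m -> 'M[R]_(m, d)) (u : 'I_N -> 'cV[R]_m).

Definition cavg (e : 'I_E) : 'cV[R]_m :=
  (vol e)^-1 *: \sum_(i in Nset e) mloc e i *: u i.

Definition has_int (e : 'I_E) : bool := Nint e != set0.
Definition sfac (e : 'I_E) : R := if has_int e then 1 else 2.
Definition m0 (e : 'I_E) : R :=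
  if has_int e then \sum_(i in Nint e) mloc e i else vol e.
Definition u0 (e : 'I_E) : 'cV[R]_m :=
  if has_int e then (m0 e)^-1 *: \sum_(i in Nint e) mloc e i *: u i
  else cavg e.

Definition ubar0 (lam : 'I_E -> 'I_N -> R) (e : 'I_E) (i : 'I_N) : 'cV[R]_m :=
  (1 / 2) *: (u i + u0 e)
  - (2 * lam e i)^-1 *: ((f (u i) - f (u0 e)) *m nvec e i).

(* \int_{dK_e} f_h n ds  with  f_h = \sum_j f(u_j) phi_j *)
Definition fluxint (e : 'I_E) : 'cV[R]_m :=
  \col_k \sum_(l < d)
     (bint M e (fun x => \sum_j (f (u j)) k l * phi M j x)) l 0.

Definition ubar (e : 'I_E) (dte : R) : 'cV[R]_m :=
  cavg e - (dte / vol e) *: fluxint e.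

Definition dtmax (lam : 'I_E -> 'I_N -> R) (e : 'I_E) : R :=
  (sfac e)^-1 *
  \big[Num.min / m0 e / \sum_(i in Nbd e) vnorm (cvec e i) * lam e i]_(i in Nbd e)
     (mloc e i / (vnorm (cvec e i) * lam e i)).

Definition uSSP (dt : R) (dte : 'I_E -> R) (i : 'I_N) : 'cV[R]_m :=
  (mglob i)^-1 *: \sum_(e in Eset i)
     mloc e i *: ((1 - dt / dte e) *: u i + (dt / dte e) *: ubar e (dte e)).

End Defs.

Arguments Nset {R d} M e.
Arguments Eset {R d} M i.
Arguments Nbd {R d} M e.
Arguments Nint {R d} M e.
Arguments mloc {R d} M e i.
Arguments mglob {R d} M i.
Arguments vol {R d} M e.
Arguments cvec {R d} M e i.
Arguments nvec {R d} M e i.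
Arguments cavg {R d m} M u e.
Arguments has_int {R d} M e.
Arguments sfac {R d} M e.
Arguments m0 {R d} M e.
Arguments u0 {R d m} M u e.
Arguments ubar0 {R d m} M f u lam e i.
Arguments fluxint {R d m} M f u e.
Arguments ubar {R d m} M f u e dte.
Arguments dtmax {R d} M lam e.
Arguments uSSP {R d m} M f u dt dte i.

From HB Require Import structures.
From mathcomp Require Import all_boot all_order all_algebra.
From mathcomp Require Import boolp ring.
Import Order.TTheory GRing.Theory Num.Theory.
Local Open Scope ring_scope.

(* The update is a convex combination of u_i and the intermediate averages
   ubar^e, so it suffices that every ubar^e lies in G.  The vectors c_{i,e}
   sum to zero (divergence theorem), which lets the flux integral be
   rewritten through the bar states:
     |K_e| ubar^e = sum_{i in N_e^bd} ((m_i^e/s - dt_e |c_{i,e}| lam_i) u_i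
                                       + 2 dt_e |c_{i,e}| lam_i ubar_{0i}^e)
                    + (m_0^e/s - dt_e sum_i |c_{i,e}| lam_i) u_0^e.
   The weights add up to |K_e| and are nonnegative precisely when
   dt_e <= dt_e^max, and u_0^e is itself an average of nodal values. *)

Lemma psumr_gt0 (R : numDomainType) (I : finType) (P : pred I) (F : I -> R) j :
  (forall i, P i -> 0 <= F i) -> P j -> 0 < F j -> 0 < \sum_(i | P i) F i.
Proof.
move=> F_ge0 Pj Fj_gt0; rewrite (bigD1 j) //= ltr_pwDl //.
by apply: sumr_ge0 => i /andP[Pi _]; exact: F_ge0.
Qed.

Section ConvexCone.
Context {R : rcfType} {m : nat} (G : 'cV[R]_m -> Prop).

(* The cone over G: (W, v) = W (1, x) with x in G, or (W, v) = (0, 0).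
   Adding such pairs amounts to taking convex combinations in G. *)
Definition in_cone (W : R) (v : 'cV[R]_m) :=
  0 <= W /\ (W = 0 -> v = 0) /\ (0 < W -> G (W^-1 *: v)).

Lemma in_cone0 : in_cone 0 0.
Proof. by split=> //; split=> //; rewrite ltxx. Qed.

Lemma in_coneZ a x : 0 <= a -> G x -> in_cone a (a *: x).
Proof.
move=> a_ge0 Gx; split=> //; split=> [->|a_gt0]; first by rewrite scale0r.
by rewrite scalerA mulVf ?gt_eqF // scale1r.
Qed.

Lemma in_cone_normalize W v : in_cone W v -> 0 < W -> G (W^-1 *: v).
Proof. by case=> _ []. Qed.

Hypothesis convexG : convex_set G.

Lemma in_coneD W1 W2 v1 v2 :
  in_cone W1 v1 -> in_cone W2 v2 -> in_cone (W1 + W2) (v1 + v2).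
Proof.
move=> [W1_ge0 [v1_0 Gv1]] [W2_ge0 [v2_0 Gv2]].
split; first exact: addr_ge0.
split=> [/eqP|W_gt0].
  by rewrite paddr_eq0 // => /andP[/eqP/v1_0 -> /eqP/v2_0 ->]; rewrite addr0.
have [W1_0|W1_neq0] := eqVneq W1 0.
  by move: W_gt0; rewrite W1_0 v1_0 // !add0r; exact: Gv2.
have [W2_0|W2_neq0] := eqVneq W2 0.
  by move: W_gt0; rewrite W2_0 v2_0 // !addr0; exact: Gv1.
have W1_gt0 : 0 < W1 by rewrite lt_def W1_neq0.
have W2_gt0 : 0 < W2 by rewrite lt_def W2_neq0.
have t_ge0 : 0 <= W1 / (W1 + W2) by rewrite divr_ge0 // ltW.
have t_le1 : W1 / (W1 + W2) <= 1 by rewrite ler_pdivrMr // mul1r lerDl.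
have -> : (W1 + W2)^-1 *: (v1 + v2) =
    W1 / (W1 + W2) *: (W1^-1 *: v1) + (1 - W1 / (W1 + W2)) *: (W2^-1 *: v2).
  rewrite !scalerA scalerDr.
  by congr (_ *: _ + _ *: _); field; rewrite ?W1_neq0 ?W2_neq0 ?gt_eqF.
exact: convexG (Gv1 W1_gt0) (Gv2 W2_gt0) _ t_ge0 t_le1.
Qed.

Lemma in_cone_sum (I : finType) (P : pred I) (W : I -> R) (v : I -> 'cV[R]_m) :
  (forall i, P i -> in_cone (W i) (v i)) ->
  in_cone (\sum_(i | P i) W i) (\sum_(i | P i) v i).
Proof.
move=> Wv; apply: (big_rec2 in_cone); first exact: in_cone0.
by move=> i W' v' /Wv; exact: in_coneD.
Qed.

Lemma convex_comb_sum (I : finType) (P : pred I) (w : I -> R) (x : I -> 'cV[R]_m) :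
  (forall i, P i -> 0 <= w i) -> (forall i, P i -> G (x i)) ->
  0 < \sum_(i | P i) w i ->
  G ((\sum_(i | P i) w i)^-1 *: \sum_(i | P i) w i *: x i).
Proof.
move=> w_ge0 Gx; apply: in_cone_normalize.
by apply: in_cone_sum => i Pi; apply: in_coneZ; [exact: w_ge0 | exact: Gx].
Qed.

End ConvexCone.

Section LinearFunctional.
Context {R : pzRingType} {T : Type} {V : lmodType R} {L : (T -> R) -> V}.
Hypothesis L_lin : forall a g h, L (fun x => a * g x + h x) = a *: L g + L h.

Lemma lfun0 : L (fun _ => 0) = 0.
Proof.
rewrite -[RHS](addNr (L (fun _ => 0))) -scaleN1r -L_lin.
by congr L; apply: funext => x; rewrite mulr0 addr0.
Qed.

Lemma lfunD g h : L (fun x => g x + h x) = L g + L h.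
Proof. by rewrite -[L g]scale1r -L_lin; congr L; apply: funext => x; rewrite mul1r. Qed.

Lemma lfunZ a g : L (fun x => a * g x) = a *: L g.
Proof.
by rewrite -[_ *: _]addr0 -lfun0 -L_lin; congr L; apply: funext => x; rewrite addr0.
Qed.

Lemma lfun_sum (I : Type) (r : seq I) (P : pred I) (F : I -> T -> R) :
  L (fun x => \sum_(i <- r | P i) F i x) = \sum_(i <- r | P i) L (F i).
Proof.
elim: r => [|j r IH].
  by rewrite big_nil -lfun0; congr L; apply: funext => x; rewrite big_nil.
rewrite big_cons -IH; case: ifP => Pj; last first.
  by congr L; apply: funext => x; rewrite big_cons Pj.
by rewrite -lfunD; congr L; apply: funext => x; rewrite big_cons Pj.
Qed.

End LinearFunctional.

Lemma vnorm_gt0 {R : rcfType} {d : nat} [v : 'cV[R]_d] : v != 0 -> 0 < vnorm v.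
Proof.
move=> v_neq0; rewrite /vnorm sqrtr_gt0.
have [k vk_neq0] : exists k, v k 0 != 0.
  apply/existsP; apply: contraR v_neq0 => /existsPn v0.
  by apply/eqP/matrixP => k j; rewrite ord1 mxE; apply/eqP/negPn.
apply: (@psumr_gt0 _ _ xpredT _ k) => //; last by rewrite exprn_even_gt0 ?vk_neq0 ?orbT.
by move=> i _; exact: sqr_ge0.
Qed.

Section MeshGeometry.
Context {R : rcfType} {d : nat} (M : fe_mesh R d).
Local Notation N := (n_nodes M).

Lemma vint_sum e (I : Type) (r : seq I) (P : pred I) (F : I -> 'cV[R]_d -> R) :
  vint M e (fun x => \sum_(i <- r | P i) F i x) = \sum_(i <- r | P i) vint M e (F i).
Proof. exact: (lfun_sum (V := R^o) (@vint_lin _ _ M e)). Qed.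

Lemma bint_sum e (I : Type) (r : seq I) (P : pred I) (F : I -> 'cV[R]_d -> R) :
  bint M e (fun x => \sum_(i <- r | P i) F i x) = \sum_(i <- r | P i) bint M e (F i).
Proof. exact: (lfun_sum (@bint_lin _ _ M e)). Qed.

Lemma phi_out e i x : i \notin Nset M e -> cell M e x -> phi M i x = 0.
Proof.
rewrite inE => /asboolPn phi_e0 ex; have [//|phi_neq0] := eqVneq (phi M i x) 0.
by case: phi_e0; exists x; split=> //; exact/eqP.
Qed.

Lemma mloc_out e i : i \notin Nset M e -> mloc M e i = 0.
Proof.
move=> i_out; rewrite /mloc -(lfun0 (V := R^o) (@vint_lin _ _ M e)).
by apply: vint_local => x; exact: phi_out.
Qed.

Lemma vol_sum e : vol M e = \sum_(i in Nset M e) mloc M e i.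
Proof.
rewrite /vol (vint_local (h := fun x => \sum_j phi M j x)); last first.
  by move=> x ex; rewrite (phi_pu ex).
rewrite vint_sum [RHS]big_mkcond; apply: eq_bigr => j _.
by case: ifP => // /negbT /mloc_out.
Qed.

Lemma Nbd_subset e : Nbd M e \subset Nset M e.
Proof. by apply/subsetP => i; rewrite inE => /andP[]. Qed.

Lemma sum_Nset_split (V : nmodType) e (F : 'I_N -> V) :
  \sum_(i in Nset M e) F i = \sum_(i in Nbd M e) F i + \sum_(i in Nint M e) F i.
Proof. by rewrite (big_setID (Nbd M e)) (setIidPr (Nbd_subset e)). Qed.

Lemma fluxint_cvec {m : nat} (f : 'cV[R]_m -> 'M[R]_(m, d)) u e :
  fluxint M f u e = \sum_i f (u i) *m cvec M e i.
Proof.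
apply/matrixP => k j; rewrite ord1 !mxE summxE.
under eq_bigr => l _ do
  rewrite (bint_sum e _ _ _ (fun i x => f (u i) k l * phi M i x)) summxE.
rewrite exchange_big; apply: eq_bigr => i _.
rewrite mxE; apply: eq_bigr => l _.
by rewrite (lfunZ (@bint_lin _ _ M e)) mxE.
Qed.

Section NoInteriorTrace.
Context {e : 'I_(n_cells M)}.
Hypothesis Nint_bdry0 :
  forall i, i \in Nint M e -> forall x, bdry M e x -> phi M i x = 0.

Lemma cvec_out i : i \notin Nbd M e -> cvec M e i = 0.
Proof.
move=> i_Nbd; rewrite /cvec -(lfun0 (@bint_lin _ _ M e)).
apply: bint_local => x ex; have [i_N|i_N] := boolP (i \in Nset M e).
  by apply: Nint_bdry0 ex; rewrite inE i_Nbd.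
exact: phi_out i_N (bdry_sub ex).
Qed.

(* The divergence theorem, through the partition of unity. *)
Lemma sum_cvec_Nbd : \sum_(i in Nbd M e) cvec M e i = 0.
Proof.
rewrite big_mkcond /= (eq_bigr (cvec M e)); last first.
  by move=> i _; case: ifP => // /negbT /cvec_out.
rewrite /cvec -bint_sum -(@divergence _ _ M e); apply: bint_local => x ex.
by rewrite (phi_pu (bdry_sub ex)).
Qed.

Lemma fluxint_shift {m : nat} (f : 'cV[R]_m -> 'M[R]_(m, d)) u w :
  fluxint M f u e = \sum_(i in Nbd M e) (f (u i) - f w) *m cvec M e i.
Proof.
rewrite fluxint_cvec (bigID (mem (Nbd M e))) /=.
rewrite [X in _ + X]big1 ?addr0 => [|i /cvec_out ->]; last exact: mulmx0.
under [RHS]eq_bigr => i _ do rewrite mulmxBl.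
by rewrite sumrB -mulmx_sumr sum_cvec_Nbd mulmx0 subr0.
Qed.

End NoInteriorTrace.
End MeshGeometry.

Section CellUpdate.
Context {R : rcfType} {d m : nat} {M : fe_mesh R d} {e : 'I_(n_cells M)}.
Hypothesis Nint_bdry0 :
  forall i, i \in Nint M e -> forall x, bdry M e x -> phi M i x = 0.
Hypothesis cvec_neq0 : forall i, i \in Nbd M e -> cvec M e i != 0.
Hypothesis mloc_gt0 : forall i, i \in Nset M e -> 0 < mloc M e i.
Context {i0 : 'I_(n_nodes M)}.
Hypothesis i0_Nset : i0 \in Nset M e.
Context {f : 'cV[R]_m -> 'M[R]_(m, d)} {G : 'cV[R]_m -> Prop}.
Hypothesis convexG : convex_set G.
Context {u : 'I_(n_nodes M) -> 'cV[R]_m}.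
Hypothesis Gu : forall j, G (u j).
Context {lam : 'I_(n_cells M) -> 'I_(n_nodes M) -> R}.
Hypothesis lam_bar :
  forall i, i \in Nbd M e -> 0 < lam e i /\ G (ubar0 M f u lam e i).

Local Notation s := (sfac M e)^-1.
Local Notation w i := (vnorm (cvec M e i) * lam e i).
Local Notation S := (\sum_(j in Nbd M e) vnorm (cvec M e j) * lam e j).

Lemma sfac_inv_gt0 : 0 < s.
Proof. by rewrite /sfac; case: ifP => _; rewrite invr_gt0 ?ltr01 ?ltr0n. Qed.

Lemma cvec_lam_gt0 i : i \in Nbd M e -> 0 < w i.
Proof.
move=> Ni; have [lam_gt0 _] := lam_bar _ Ni.
by rewrite mulr_gt0 ?vnorm_gt0 ?cvec_neq0.
Qed.

Lemma vol_gt0 : 0 < vol M e.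
Proof.
rewrite vol_sum; apply: (@psumr_gt0 _ _ _ _ i0) => // [i|].
  by move/mloc_gt0/ltW.
exact: mloc_gt0.
Qed.

Lemma m0_gt0 : 0 < m0 M e.
Proof.
rewrite /m0; case: ifP => [/set0Pn[j j_int]|_]; last exact: vol_gt0.
have Nint_Nset i : i \in Nint M e -> i \in Nset M e by rewrite inE => /andP[].
apply: (@psumr_gt0 _ _ _ _ j) => // [i /Nint_Nset/mloc_gt0/ltW //|].
exact/mloc_gt0/Nint_Nset.
Qed.

Lemma m0_mass : s * (\sum_(i in Nbd M e) mloc M e i + m0 M e) = vol M e.
Proof.
rewrite /m0 /sfac /has_int vol_sum sum_Nset_split.
case: ifP => [_|/negbFE/eqP ->]; first by rewrite invr1 mul1r.
by rewrite big_set0 addr0; field.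
Qed.

Lemma u0_moment :
  s *: (\sum_(i in Nbd M e) mloc M e i *: u i + m0 M e *: u0 M u e) =
  \sum_(i in Nset M e) mloc M e i *: u i.
Proof.
have m0_neq0 := lt0r_neq0 m0_gt0.
rewrite /u0 /sfac sum_Nset_split; move: m0_neq0; rewrite /m0 /has_int.
case: ifP => [_ m0_neq0|/negbFE/eqP Nint0 _].
  by rewrite invr1 scale1r scalerA mulfV // scale1r.
rewrite Nint0 big_set0 addr0 /cavg sum_Nset_split Nint0 big_set0 addr0.
rewrite scalerA mulfV ?lt0r_neq0 ?vol_gt0 // scale1r.
by rewrite -mulr2n -scaler_nat scalerA mulVf ?pnatr_eq0 // scale1r.
Qed.

Lemma u0_in_G : G (u0 M u e).
Proof.
have := m0_gt0; rewrite /u0 /m0 /has_int; case: ifP => _ m0_pos.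
  apply: convex_comb_sum => // i; rewrite inE => /andP[_].
  by move/mloc_gt0/ltW.
rewrite /cavg vol_sum; rewrite vol_sum in m0_pos.
by apply: convex_comb_sum => // i /mloc_gt0/ltW.
Qed.

Lemma fluxint_bar_states :
  fluxint M f u e = \sum_(i in Nbd M e)
    (w i *: (u i + u0 M u e) - (2 * w i) *: ubar0 M f u lam e i).
Proof.
rewrite (fluxint_shift M Nint_bdry0 f u (u0 M u e)); apply: eq_bigr => i Ni.
have [lam_gt0 _] := lam_bar _ Ni.
have c_gt0 := vnorm_gt0 (cvec_neq0 _ Ni).
rewrite /ubar0 /nvec -scalemxAr.
apply/matrixP => k j; rewrite !mxE.
by field; rewrite ?lt0r_neq0.
Qed.

Lemma dtmax_le_node dt i : dt <= dtmax M lam e -> i \in Nbd M e ->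
  dt * w i <= s * mloc M e i.
Proof.
move=> dt_le Ni; rewrite -ler_pdivlMr ?cvec_lam_gt0 // -mulrA.
apply: le_trans dt_le _; apply: ler_wpM2l; first exact/ltW/sfac_inv_gt0.
exact: bigmin_le_cond.
Qed.

Lemma dtmax_le_center dt : dt <= dtmax M lam e -> dt * S <= s * m0 M e.
Proof.
move=> dt_le.
have S_ge0 : 0 <= S by apply: sumr_ge0 => i /cvec_lam_gt0/ltW.
have [S_gt0|S_le0] := ltP 0 S; last first.
  have -> : S = 0 by apply/eqP; rewrite eq_le S_le0 S_ge0.
  by rewrite mulr0 mulr_ge0 // ltW ?sfac_inv_gt0 ?m0_gt0.
rewrite -ler_pdivlMr // -mulrA.
apply: le_trans dt_le _; apply: ler_wpM2l; first exact/ltW/sfac_inv_gt0.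
exact: bigmin_le_id.
Qed.

Lemma vol_ubar dt :
  vol M e *: ubar M f u e dt =
  \sum_(i in Nbd M e) ((s * mloc M e i - dt * w i) *: u i
                       + (2 * dt * w i) *: ubar0 M f u lam e i)
  + (s * m0 M e - dt * S) *: u0 M u e.
Proof.
have vol_neq0 := lt0r_neq0 vol_gt0.
rewrite /ubar /cavg scalerBr !scalerA mulfV // scale1r mulrCA mulfV // mulr1.
rewrite -u0_moment fluxint_bar_states.
rewrite [in RHS](eq_bigr (fun i => s *: (mloc M e i *: u i)
    - dt *: (w i *: (u i + u0 M u e) - (2 * w i) *: ubar0 M f u lam e i)
    + (dt * w i) *: u0 M u e)); last first.
  by move=> i _; apply/matrixP => k j; rewrite !mxE; ring.
rewrite [in RHS]big_split [in RHS]sumrB /= -!scaler_sumr -scaler_suml -mulr_sumr.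
by apply/matrixP => k j; rewrite !mxE; ring.
Qed.

Lemma ubar_in_G dt : 0 <= dt -> dt <= dtmax M lam e -> G (ubar M f u e dt).
Proof.
move=> dt_ge0 dt_le.
have mass : \sum_(i in Nbd M e) ((s * mloc M e i - dt * w i) + 2 * dt * w i)
            + (s * m0 M e - dt * S) = vol M e.
  rewrite -m0_mass (eq_bigr (fun i => s * mloc M e i + dt * w i)); last first.
    by move=> i _; ring.
  by rewrite big_split /= -!mulr_sumr; ring.
have : in_cone G (\sum_(i in Nbd M e) ((s * mloc M e i - dt * w i) + 2 * dt * w i)
                  + (s * m0 M e - dt * S)) (vol M e *: ubar M f u e dt).
  rewrite vol_ubar; apply: (in_coneD _ convexG).
    apply: (in_cone_sum _ convexG) => i Ni; have [_ Gb] := lam_bar _ Ni.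
    apply: (in_coneD _ convexG); apply: in_coneZ => //.
      by rewrite subr_ge0; exact: dtmax_le_node.
    by apply: mulr_ge0; [exact: mulr_ge0 | exact/ltW/cvec_lam_gt0].
  apply: in_coneZ; last exact: u0_in_G.
  by rewrite subr_ge0; exact: dtmax_le_center.
rewrite mass => /in_cone_normalize/(_ vol_gt0).
by rewrite scalerA mulVf ?lt0r_neq0 ?vol_gt0 // scale1r.
Qed.

End CellUpdate.

Theorem theorem1 (R : rcfType) (d m : nat) (M : fe_mesh R d)
  (* Bernstein-basis / mesh facts stated in the context *)
  (Hint0 : forall e i, i \in Nint M e -> forall x, bdry M e x -> phi M i x = 0)
  (Hc0 : forall e i, i \in Nbd M e -> cvec M e i != 0)
  (Hmpos : forall e i, i \in Nset M e -> 0 < mloc M e i)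
  (Hcover : forall i, exists e, i \in Nset M e)
  (f : 'cV[R]_m -> 'M[R]_(m, d)) (G : 'cV[R]_m -> Prop) (HG : convex_set G)
  (u : 'I_(n_nodes M) -> 'cV[R]_m) (Hu : forall j, G (u j))
  (lam : 'I_(n_cells M) -> 'I_(n_nodes M) -> R)
  (Hlam : forall e i, i \in Nbd M e -> 0 < lam e i /\ G (ubar0 M f u lam e i))
  (dte : 'I_(n_cells M) -> R)
  (Hdte : forall e, 0 < dte e /\ dte e <= dtmax M lam e)
  (dt : R) (Hdt : 0 < dt) (Hdtle : forall e, dt <= dte e) :
  forall i, G (uSSP M f u dt dte i).
Proof.
move=> i; have Eset_Nset e : (e \in Eset M i) = (i \in Nset M e) by rewrite inE.
have [e0 i_e0] := Hcover i.
rewrite /uSSP /mglob; apply: (convex_comb_sum _ HG) => [e|e|].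
- by rewrite Eset_Nset => /Hmpos/ltW.
- rewrite Eset_Nset => i_e; have [dte_gt0 dte_le] := Hdte e.
  have t_ge0 : 0 <= dt / dte e by rewrite divr_ge0 // ltW.
  have t_le1 : dt / dte e <= 1 by rewrite ler_pdivrMr // mul1r.
  rewrite addrC; apply: (HG _ _ _ (Hu i) _ t_ge0 t_le1).
  apply: (ubar_in_G (Hint0 e) (Hc0 e) (Hmpos e) i_e HG Hu (Hlam e)) => //.
  exact: ltW.
- apply: (@psumr_gt0 _ _ _ _ e0); rewrite ?Eset_Nset //; last exact: Hmpos.
  by move=> e; rewrite Eset_Nset => /Hmpos/ltW.
Qed.
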